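(* Let $n,k\ge1$ and $\theta>0$. Let $r_1,\dots,r_k$ be nonnegative integers with $r:=\sum_{i=1}^k r_i\le n$ and $\kappa:=\sum_{i=1}^k ir_i\le k$. Then $$\mathbf E\left[\prod_{i=1}^k\{A_{n,k}(i)\}_{r_i}\right]=\{n\}_r\{k\}_\kappa\,\frac{\sigma_{k-\kappa}((n-r)\theta)}{\sigma_k(n\theta)}\prod_{i=1}^k\left(\frac{\sigma_i(\theta)}{i!}\right)^{r_i}.$$
   Context: Let $(\phi_m)_{m\ge1}$ be nonnegative reals with $\phi_1>0$ such that $\phi(x)=\sum_{m\ge1}\phi_m x^m/m!$ has positive radius of convergence. For $\theta>0$ define the polynomials $\sigma_k(\theta)$ by $e^{\theta\phi(x)}=1+\sum_{k\ge1}\sigma_k(\theta)x^k/k!$, with $\sigma_0\equiv1$. For integers $n,k\ge1$, let $\mathbf K_{n,k}=(K_{n,k}(1),\dots,K_{n,k}(n))$ be a random vector in $\mathbb N_0^n$ with $$\mathbf P(\mathbf K_{n,k}=(k_1,\dots,k_n))=\frac{k!}{\sigma_k(n\theta)}\prod_{m=1}^n\frac{\sigma_{k_m}(\theta)}{k_m!}\quad\text{for } k_1+\dots+k_n=k.$$ For $i=0,\dots,k$ let $A_{n,k}(i):=\#\{m:K_{n,k}(m)=i\}$. The falling factorial is $\{a\}_l=a(a-1)\cdots(a-l+1)$, with $\{a\}_0=1$. *)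

From HB Require Import structures.
From mathcomp Require Import all_boot all_order all_algebra.
From mathcomp Require Import all_classical all_reals all_analysis.
Set Implicit Arguments. Unset Strict Implicit. Unset Printing Implicit Defensive.
Import Order.TTheory GRing.Theory Num.Theory numFieldNormedType.Exports.
Local Open Scope ring_scope.

Section Defs.
Variable R : realType.
(* phi : nat -> R, with phi m = phi_m for m >= 1 (phi 0 is ignored). *)
Variable phi : nat -> R.

Definition phi_term (x : R) (m : nat) : R :=
  if m is 0 then 0 else phi m * x ^+ m / (m`!)%:R.

Definition phi_pos_radius : Prop :=
  exists2 x : R, 0 < x & cvgn (series (phi_term x)).

Definition phi_poly (k : nat) : {poly R} :=
  \poly_(i < k.+1) (if i is 0 then 0 else phi i / (i`!)%:R).

(* sigma_k(theta) = k! [x^k] exp(theta phi(x))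
                  = k! sum_{j=0}^{k} theta^j/j! [x^k] phi(x)^j
   (formal power series coefficient; phi has no constant term, so only
    j <= k contribute and truncating phi at degree k does not change [x^k]) *)
Definition sigma (k : nat) (theta : R) : R :=
  (k`!)%:R * \sum_(j < k.+1) theta ^+ j / (j`!)%:R * ((phi_poly k) ^+ j)`_k.

(* P(K_{n,k} = v), for v = (k_1,...,k_n) with k_1 + ... + k_n = k *)
Definition probK (n k : nat) (theta : R) (v : {ffun 'I_n -> 'I_k.+1}) : R :=
  (k`!)%:R / sigma k (n%:R * theta) *
  \prod_(m < n) (sigma (v m) theta / ((v m)`!)%:R).

(* the support: vectors in N_0^n summing to k (entries are automatically <= k) *)
Definition supportK (n k : nat) (v : {ffun 'I_n -> 'I_k.+1}) : bool :=
  (\sum_(m < n) (v m : nat))%N == k.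

Definition A_of (n k : nat) (v : {ffun 'I_n -> 'I_k.+1}) (i : nat) : nat :=
  #|[set m : 'I_n | (v m : nat) == i]|.

Definition EK (n k : nat) (theta : R) (f : {ffun 'I_n -> 'I_k.+1} -> R) : R :=
  \sum_(v : {ffun 'I_n -> 'I_k.+1} | supportK v) probK theta v * f v.

End Defs.

From HB Require Import structures.
From mathcomp Require Import all_boot all_order all_algebra.
From mathcomp Require Import all_classical all_reals all_analysis.
From mathcomp Require Import ring zify.
Set Implicit Arguments. Unset Strict Implicit. Unset Printing Implicit Defensive.
Import Order.TTheory GRing.Theory Num.Theory.
Local Open Scope ring_scope.

(* Writing e_i := sigma_i(theta)/i!, the law of K_{n,k} has weights
   proportional to e_{k_1} ... e_{k_n}, so the moment is k!/sigma_k(n theta)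
   times a weighted sum over compositions of k into n parts.  Splitting off
   the first part and using {a+1}_r = {a}_r + r {a}_{r-1} gives, for ANY
   weights e, that this sum equals {n}_r e_1^{r_1} ... e_k^{r_k} times the
   weighted count of compositions of k - kappa into n - r parts.  For the
   weights at hand that count is sigma_{k-kappa}((n-r) theta)/(k-kappa)!,
   because sigma_i(a)/i! are the coefficients of exp(a phi(x)) and
   exp(a phi)^N = exp(N a phi) modulo x^{k+1}. *)

Section PolyCoefUpto.
Variable R : comNzRingType.

Definition eq_upto (d : nat) (p q : {poly R}) := forall m, (m <= d)%N -> p`_m = q`_m.

Lemma eq_upto_trans d p q s : eq_upto d p q -> eq_upto d q s -> eq_upto d p s.
Proof. by move=> pq qs m hm; rewrite pq ?qs. Qed.

Lemma eq_uptoM d p p' q q' :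
  eq_upto d p p' -> eq_upto d q q' -> eq_upto d (p * q) (p' * q').
Proof.
move=> pp' qq' m hm; rewrite !coefM; apply: eq_bigr => j _.
by rewrite pp' ?qq' //; have := ltn_ord j; lia.
Qed.

Lemma eq_uptoX d p q j : eq_upto d p q -> eq_upto d (p ^+ j) (q ^+ j).
Proof.
move=> pq; elim: j => [|j IH] m hm; first by [].
by rewrite !exprS (eq_uptoM pq IH).
Qed.

Lemma coefX_eq0 (p : {poly R}) j m : p`_0 = 0 -> (m < j)%N -> (p ^+ j)`_m = 0.
Proof.
move=> p0; elim: j m => [//|j IH] m hm.
rewrite exprSr coefM big1 // => l _.
have [lj|jl] := ltnP l j; first by rewrite IH // mul0r.
by rewrite (_ : m - l = 0)%N ?p0 ?mulr0 //; have := ltn_ord l; lia.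
Qed.

Lemma coef_poly_exprn (e : nat -> R) d N K :
  ((\poly_(i < d.+1) e i) ^+ N)`_K =
  \sum_(v : {ffun 'I_N -> 'I_d.+1} | (\sum_(m < N) (v m : nat))%N == K)
    \prod_(m < N) e (v m).
Proof.
rewrite -[in LHS](card_ord N) -prodr_const poly_def bigA_distr_bigA coef_sum.
rewrite [RHS]big_mkcond /=; apply: eq_bigr => v _.
under eq_bigr do rewrite -mul_polyC.
rewrite big_split /= -rmorph_prod prodrXr coefCM coefXn eq_sym.
by case: (_ == _); rewrite ?mulr1 ?mulr0.
Qed.

End PolyCoefUpto.

Lemma sum_antidiagonal (V : nmodType) (h : nat -> nat -> V) N :
  (forall j l, (N < j + l)%N -> h j l = 0) ->
  \sum_(j < N.+1) \sum_(l < N.+1) h j l = \sum_(s < N.+1) \sum_(j < s.+1) h j (s - j)%N.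
Proof.
move=> h0.
have triangle M : \sum_(s < M) \sum_(j < s.+1) h j (s - j)%N
                = \sum_(j < M) \sum_(l < M - j) h j l.
  elim: M => [|M IH]; first by rewrite !big_ord0.
  rewrite big_ord_recr /= IH.
  under [RHS]eq_bigr => j _ do rewrite subSn ?big_ord_recr -1?ltnS //.
  by rewrite big_split /= [in RHS]big_ord_recr /= subnn big_ord0 addr0.
rewrite triangle; apply: eq_bigr => j _.
rewrite [RHS](big_ord_widen N.+1 (h j)) ?leq_subr // [RHS]big_mkcond /=.
apply: eq_bigr => l _; case: ifP => // /negbT lj; rewrite h0 //; lia.
Qed.

Lemma natr_fact_neq0 (R : numDomainType) n : ((n`!)%:R : R) != 0.
Proof. by rewrite pnatr_eq0 -lt0n fact_gt0. Qed.

Section SigmaConvolution.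
Variables (R : realType) (phi : nat -> R) (k : nat).

Local Notation Q := (phi_poly phi k).

(* exp(a phi(x)) up to degree k: the coefficients of Q ^+ j vanish below degree j. *)
Definition trunc_exp (a : R) : {poly R} :=
  \sum_(j < k.+1) (a ^+ j / (j`!)%:R) *: Q ^+ j.

Lemma phi_poly_coef0 : Q`_0 = 0.
Proof. by rewrite coef_poly. Qed.

Lemma sigma_coef_trunc_exp a i :
  (i <= k)%N -> sigma phi i a / (i`!)%:R = (trunc_exp a)`_i.
Proof.
move=> ik; rewrite /sigma mulrC mulKf ?natr_fact_neq0 // /trunc_exp coef_sum.
rewrite (big_ord_widen k.+1 (fun j => a ^+ j / (j`!)%:R * (phi_poly phi i ^+ j)`_i)) //.
rewrite big_mkcond /=; apply: eq_bigr => j _; rewrite coefZ; case: ifP => ji.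
  congr (_ * _); apply: eq_uptoX => [m mi|]; last exact: leqnn.
  by rewrite !coef_poly !ltnS mi (leq_trans mi ik).
by rewrite coefX_eq0 ?mulr0 ?phi_poly_coef0 //; move/negbT: ji; lia.
Qed.

Lemma trunc_exp0 : trunc_exp 0 = 1.
Proof.
rewrite /trunc_exp big_ord_recl big1 ?addr0 => [|j _].
  by rewrite !expr0 divr1 scale1r.
by rewrite expr0n /= mul0r scale0r.
Qed.

Lemma trunc_expD a b : eq_upto k (trunc_exp a * trunc_exp b) (trunc_exp (a + b)).
Proof.
move=> m mk; rewrite /trunc_exp mulr_suml coef_sum.
under eq_bigr do rewrite mulr_sumr coef_sum.
under eq_bigr do under eq_bigr do rewrite -scalerAl -scalerAr !coefZ -exprD mulrA.
rewrite (@sum_antidiagonal _ (fun j l =>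
  a ^+ j / (j`!)%:R * (b ^+ l / (l`!)%:R) * (Q ^+ (j + l))`_m)) => [|j l jl]; last first.
  by rewrite coefX_eq0 ?mulr0 ?phi_poly_coef0 //; lia.
rewrite coef_sum; apply: eq_bigr => s _; rewrite coefZ.
under eq_bigr => j _ do rewrite subnKC -1?ltnS //.
rewrite -mulr_suml; congr (_ * _).
rewrite addrC exprDn mulr_suml; apply: eq_bigr => j _ /=.
have js : (j <= s)%N by rewrite -ltnS.
have binomE : ('C(s, j)%:R * ((j`!)%:R * ((s - j)`!)%:R) = (s`!)%:R :> R).
  by rewrite -!natrM bin_fact.
have binom_neq0 : ('C(s, j)%:R : R) != 0 by rewrite pnatr_eq0 -lt0n bin_gt0.
rewrite -binomE -mulr_natr; field.
by rewrite binom_neq0 !natr_fact_neq0.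
Qed.

Lemma trunc_exp_exprn N a : eq_upto k (trunc_exp a ^+ N) (trunc_exp (N%:R * a)).
Proof.
elim: N => [|N IH]; first by rewrite expr0 mul0r trunc_exp0.
rewrite exprS -[N.+1]add1n natrD mulrDl mul1r.
by apply: eq_upto_trans (trunc_expD _ _); apply: eq_uptoM.
Qed.

Lemma sum_prod_sigma theta N K : (K <= k)%N ->
  \sum_(v : {ffun 'I_N -> 'I_k.+1} | (\sum_(m < N) (v m : nat))%N == K)
     \prod_(m < N) (sigma phi (v m) theta / ((v m)`!)%:R)
  = sigma phi K (N%:R * theta) / (K`!)%:R.
Proof.
move=> Kk; rewrite -(coef_poly_exprn (fun i => sigma phi i theta / (i`!)%:R)).
rewrite sigma_coef_trunc_exp //.
apply: eq_upto_trans (trunc_exp_exprn N theta) _ Kk.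
by apply: eq_uptoX => m mk; rewrite coef_poly ltnS mk sigma_coef_trunc_exp.
Qed.

End SigmaConvolution.

Lemma ffactSn a m : (a.+1 ^_ m = a ^_ m + m * a ^_ m.-1)%N.
Proof.
case: m => [|m] //=; rewrite ffactSS ffactnSr.
have [ma|am] := leqP m a; last by rewrite ffact_small // !muln0 mul0n.
by rewrite (_ : a.+1 = a - m + m.+1)%N 1?mulnDl 1?mulnC //; lia.
Qed.

Section FactorialMoments.
Variables (R : comNzRingType) (e : nat -> R) (k : nat).
Local Notation vec n := {ffun 'I_n -> 'I_k.+1}.
Local Notation total v := (\sum_m (v m : nat))%N.

Definition ffcons n (j : 'I_k.+1) (w : vec n) : vec n.+1 :=
  [ffun m => if unlift ord0 m is Some m' then w m' else j].

Lemma ffcons0 n j (w : vec n) : ffcons j w ord0 = j.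
Proof. by rewrite ffunE unlift_none. Qed.

Lemma ffconsS n j (w : vec n) m : ffcons j w (lift ord0 m) = w m.
Proof. by rewrite ffunE liftK. Qed.

Lemma big_ffcons n (F : vec n.+1 -> R) :
  \sum_v F v = \sum_(j : 'I_k.+1) \sum_(w : vec n) F (ffcons j w).
Proof.
rewrite pair_big /= (reindex (fun p : 'I_k.+1 * vec n => ffcons p.1 p.2)) //=.
exists (fun v : vec n.+1 => (v ord0, [ffun m => v (lift ord0 m)])) => [[j w] _|v _] /=.
  by rewrite ffcons0; congr pair; apply/ffunP => m; rewrite ffunE ffconsS.
by apply/ffunP => m; rewrite ffunE; case: unliftP => [m'|] ->; rewrite ?ffunE.
Qed.

Lemma total_ffcons n j (w : vec n) : total (ffcons j w) = (j + total w)%N.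
Proof.
by rewrite big_ord_recl ffcons0; congr (_ + _); apply: eq_bigr => m _; rewrite ffconsS.
Qed.

Lemma prod_ffcons n j (w : vec n) :
  \prod_m e (ffcons j w m) = e j * \prod_m e (w m).
Proof.
by rewrite big_ord_recl ffcons0; congr (_ * _); apply: eq_bigr => m _; rewrite ffconsS.
Qed.

Lemma A_of_ffcons n j (w : vec n) i :
  A_of (ffcons j w) i = ((j == i :> nat) + A_of w i)%N.
Proof.
rewrite /A_of -!sum1dep_card !big_mkcond big_ord_recl ffcons0; congr addn.
by rewrite [RHS]big_mkcond; apply: eq_bigr => m _; rewrite ffconsS.
Qed.

Lemma big_total_ffcons n K (F : vec n.+1 -> R) :
  \sum_(v : vec n.+1 | total v == K) F v =
  \sum_(j < k.+1) (if (j <= K)%N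
    then \sum_(w : vec n | total w == (K - j)%N) F (ffcons j w) else 0).
Proof.
rewrite big_mkcond big_ffcons; apply: eq_bigr => j _.
rewrite [in RHS]big_mkcond; case: leqP => jK /=; last first.
  by rewrite big1 // => w _; rewrite total_ffcons; case: eqP => //; lia.
by apply: eq_bigr => w _; rewrite total_ffcons -{1}(subnKC jK) eqn_add2l.
Qed.

Definition prod_ffact_A n (r : nat -> nat) (v : vec n) : R :=
  \prod_(1 <= i < k.+1) ((A_of v i) ^_ (r i))%:R.

Definition wsum n K : R := \sum_(v : vec n | total v == K) \prod_m e (v m).

Definition wmoment n K r : R :=
  \sum_(v : vec n | total v == K) \prod_m e (v m) * prod_ffact_A r v.

(* Weighted count of compositions of K - c; the test guards against the
   truncated subtraction when c > K. *)
Definition wsum_from n c K : R := if (c <= K)%N then wsum n (K - c)%N else 0.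

Definition rsize (r : nat -> nat) := (\sum_(1 <= i < k.+1) r i)%N.
Definition rweight (r : nat -> nat) := (\sum_(1 <= i < k.+1) i * r i)%N.
Definition epow (r : nat -> nat) : R := \prod_(1 <= i < k.+1) e i ^+ r i.
Definition decr_at (r : nat -> nat) j i := if i == j then (r i).-1 else r i.

Definition wmoment_closed n K r : R :=
  (n ^_ rsize r)%:R * wsum_from (n - rsize r)%N (rweight r) K * epow r.

Lemma wsumS n K :
  wsum n.+1 K = \sum_(j < k.+1) (if (j <= K)%N then e j * wsum n (K - j)%N else 0).
Proof.
rewrite /wsum big_total_ffcons; apply: eq_bigr => j _; case: ifP => // _.
by rewrite mulr_sumr; apply: eq_bigr => w _; rewrite prod_ffcons.
Qed.

Lemma wsum_fromS n c K :
  wsum_from n.+1 c K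
  = \sum_(j < k.+1) (if (j <= K)%N then e j * wsum_from n c (K - j)%N else 0).
Proof.
rewrite /wsum_from; have [cK|Kc] := leqP c K; last first.
  by rewrite big1 // => j _; case: ifP => // _; case: leqP; rewrite ?mulr0 //; lia.
rewrite wsumS; apply: eq_bigr => j _.
have [jKc|Kcj] := leqP j (K - c)%N.
  by rewrite (_ : j <= K)%N 1?(_ : c <= K - j)%N 1?(_ : K - j - c = K - c - j)%N //; lia.
by case: leqP => // jK; case: leqP; rewrite ?mulr0 //; lia.
Qed.

Lemma wsum_from_decr n c j K : (j <= c)%N ->
  (if (j <= K)%N then wsum_from n (c - j) (K - j)%N else 0) = wsum_from n c K.
Proof.
rewrite /wsum_from => jc; case: leqP => jK; last by case: leqP => //; lia.
by rewrite (_ : (c - j <= K - j) = (c <= K))%N 1?(_ : K - j - (c - j) = K - c)%N //; lia.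
Qed.

Lemma big_decr_at (T : Type) (idx : T) (op : Monoid.com_law idx)
    (F : nat -> nat -> T) r j : (0 < j <= k)%N ->
  \big[op/idx]_(1 <= i < k.+1) F i (decr_at r j i)
  = op (F j (r j).-1) (\big[op/idx]_(i <- index_iota 1 k.+1 | i != j) F i (r i)).
Proof.
move=> jk; rewrite (bigD1_seq j) ?iota_uniq ?mem_index_iota //= /decr_at eqxx.
by congr (op _ _); apply: eq_bigr => i /negbTE ->.
Qed.

Lemma decr_at_facts r j : (0 < j <= k)%N -> (0 < r j)%N ->
  [/\ rsize (decr_at r j) = (rsize r).-1, rweight (decr_at r j) = (rweight r - j)%N,
      (j <= rweight r)%N & epow r = e j * epow (decr_at r j)].
Proof.
move=> jk rj; rewrite /rsize /rweight /epow.
rewrite (@big_decr_at _ _ _ (fun _ x => x)) ?(@big_decr_at _ _ _ (fun i x => i * x)%N) //.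
rewrite (@big_decr_at _ _ _ (fun i x => e i ^+ x)) //.
rewrite !(bigD1_seq j) ?iota_uniq ?mem_index_iota //=.
by move: (r j) rj => [|s] // _; rewrite exprS mulrA; split => //; lia.
Qed.

Lemma prod_ffact_A_ffcons n j (w : vec n) r :
  prod_ffact_A r (ffcons j w)
  = prod_ffact_A r w + (if (0 < j)%N then (r j)%:R * prod_ffact_A (decr_at r j) w else 0).
Proof.
rewrite /prod_ffact_A; under eq_bigr do rewrite A_of_ffcons.
have [->|j0] := posnP j.
  by rewrite addr0; apply: eq_big_nat => i /andP[i0 _]; rewrite ltn_eqF.
have jk : (0 < j <= k)%N by rewrite j0 -ltnS ltn_ord.
rewrite (@big_decr_at _ _ _ (fun i x => ((A_of w i) ^_ x)%:R)) //.
rewrite !(bigD1_seq (j : nat)) ?iota_uniq ?mem_index_iota //= eqxx.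
under eq_bigr => i ij do rewrite eq_sym (negbTE ij).
by rewrite add1n ffactSn natrD natrM; ring.
Qed.

Lemma wmomentS n K r : wmoment n.+1 K r =
  \sum_(j < k.+1) (if (j <= K)%N then e j * (wmoment n (K - j)%N r +
     (if (0 < j)%N then (r j)%:R * wmoment n (K - j)%N (decr_at r j) else 0)) else 0).
Proof.
rewrite /wmoment big_total_ffcons; apply: eq_bigr => j _; case: ifP => // _.
under eq_bigr do rewrite prod_ffcons prod_ffact_A_ffcons mulrDr.
rewrite big_split /= mulrDr mulr_sumr; congr (_ + _).
  by apply: eq_bigr => w _; rewrite mulrA.
case: ifP => _; last by rewrite mulr0 big1 // => w _; rewrite mulr0.
by rewrite !mulr_sumr; apply: eq_bigr => w _; ring.
Qed.

Lemma wmoment0 K r : wmoment 0 K r = wmoment_closed 0 K r.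
Proof.
have A0 (v : vec 0) i : A_of v i = 0%N by apply: eq_card0 => -[].
have prod0 (v : vec 0) : prod_ffact_A r v = \prod_(1 <= i < k.+1) ((0 ^_ r i)%:R : R).
  by apply: eq_bigr => i _; rewrite A0.
rewrite /wmoment; under eq_bigr do rewrite prod0.
rewrite -mulr_suml -/(wsum 0 K) /wmoment_closed /wsum_from.
have [r0|r_neq0] := eqVneq (rsize r) 0%N.
  have {}r0 i : i \in index_iota 1 k.+1 -> r i = 0%N.
    by move: r0 => /eqP; rewrite sum_nat_seq_eq0 => /allP r0 /r0 /eqP.
  rewrite /rsize /rweight /epow !big_seq !big1 => [|i /r0 ->|i /r0 ->|i /r0 ->|i /r0 ->];
    by rewrite ?subn0 ?mulr1 ?mul1r ?muln0.
rewrite ffact0n (negbTE r_neq0) !mul0r.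
move: r_neq0; rewrite sum_nat_seq_neq0 => /hasP[i iI /= ri0].
by rewrite (bigD1_seq i) ?iota_uniq //= ffact0n (negbTE ri0) mul0r mulr0.
Qed.

Lemma sum_wmoment_closed n K r :
  \sum_(j < k.+1) (if (j <= K)%N then e j * wmoment_closed n (K - j)%N r else 0)
  = (n ^_ rsize r)%:R * wsum_from (n - rsize r).+1 (rweight r) K * epow r.
Proof.
rewrite wsum_fromS mulr_sumr mulr_suml; apply: eq_bigr => j _.
by case: ifP => _; rewrite /wmoment_closed ?mulr0 ?mul0r //; ring.
Qed.

Lemma sum_wmoment_closed_decr n K (r : nat -> nat) :
  \sum_(j < k.+1) (if (j <= K)%N then
     e j * (if (0 < j)%N then (r j)%:R * wmoment_closed n (K - j)%N (decr_at r j) else 0)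
   else 0)
  = (rsize r)%:R * (n ^_ (rsize r).-1)%:R
    * wsum_from (n - (rsize r).-1) (rweight r) K * epow r.
Proof.
have rsizeE : rsize r = (\sum_(j < k.+1) (if (0 < j)%N then r j else 0))%N.
  rewrite -(big_mkord xpredT (fun j => if (0 < j)%N then r j else 0%N)) big_ltn //= add0n.
  by apply: eq_big_nat => i /andP[-> _].
rewrite {1}rsizeE natr_sum !mulr_suml; apply: eq_bigr => j _.
have [->|j0] := posnP j; first by rewrite /= mulr0 !mul0r.
have [rj0|rj] := posnP (r j); first by rewrite rj0 /= !mul0r mulr0 if_same.
have jk : (0 < j <= k)%N by rewrite j0 -ltnS ltn_ord.
have [sizeE weightE jw epowE] := decr_at_facts jk rj.
rewrite /= -(wsum_from_decr _ _ jw) /wmoment_closed sizeE weightE epowE.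
by case: ifP => _; rewrite ?mulr0 ?mul0r //; ring.
Qed.

Lemma wmomentE n K r : wmoment n K r = wmoment_closed n K r.
Proof.
elim: n K r => [|n IH] K r; first exact: wmoment0.
rewrite wmomentS (eq_bigr (fun j : 'I_k.+1 =>
    (if (j <= K)%N then e j * wmoment_closed n (K - j)%N r else 0) +
    (if (j <= K)%N then e j * (if (0 < j)%N
       then (r j)%:R * wmoment_closed n (K - j)%N (decr_at r j) else 0) else 0))); last first.
  by move=> j _; rewrite !IH; case: ifP => _; rewrite ?mulrDr ?addr0.
rewrite big_split /= sum_wmoment_closed sum_wmoment_closed_decr /wmoment_closed.
case: (rsize r) => [|s]; first by rewrite !subn0 !mul0r addr0.
rewrite subSS /=.
have -> : (n ^_ s.+1)%:R * wsum_from (n - s.+1).+1 (rweight r) K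
        = (n ^_ s.+1)%:R * wsum_from (n - s) (rweight r) K :> R.
  by have [sn|ns] := ltnP s n; [rewrite subnSK | rewrite ffact_small ?mul0r].
by rewrite ffactSn natrD natrM; ring.
Qed.

End FactorialMoments.

Theorem proposition5 (R : realType) (phi : nat -> R)
  (phi_nonneg : forall m : nat, (0 < m)%N -> 0 <= phi m)
  (phi1_pos : 0 < phi 1%N)
  (phi_rad : phi_pos_radius phi)
  (n k : nat) (hn : (1 <= n)%N) (hk : (1 <= k)%N)
  (theta : R) (htheta : 0 < theta)
  (r : nat -> nat)
  (hr : (\sum_(1 <= i < k.+1) r i <= n)%N)
  (hkappa : (\sum_(1 <= i < k.+1) i * r i <= k)%N) :
  let rr := (\sum_(1 <= i < k.+1) r i)%N in
  let kappa := (\sum_(1 <= i < k.+1) i * r i)%N in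
  EK phi theta
    (fun v : {ffun 'I_n -> 'I_k.+1} => \prod_(1 <= i < k.+1) ((A_of v i) ^_ (r i))%:R)
  = (n ^_ rr)%:R * (k ^_ kappa)%:R
    * (sigma phi (k - kappa) ((n - rr)%:R * theta) / sigma phi k (n%:R * theta))
    * \prod_(1 <= i < k.+1) (sigma phi i theta / (i`!)%:R) ^+ (r i).
Proof.
move=> rr kappa; set e := fun i => sigma phi i theta / (i`!)%:R.
have -> : EK phi theta (@prod_ffact_A R k n r)
        = (k`!)%:R / sigma phi k (n%:R * theta) * wmoment e k n k r.
  by rewrite /EK /wmoment mulr_sumr; apply: eq_bigr => v _; rewrite /probK mulrA.
rewrite wmomentE /wmoment_closed /wsum_from hkappa /wsum sum_prod_sigma ?leq_subr //.
rewrite -(ffact_fact hkappa) natrM.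
have [->|sigma_neq0] := eqVneq (sigma phi k (n%:R * theta)) 0.
  by rewrite invr0 !mulr0 !mul0r.
rewrite /rr /kappa /rsize /rweight /epow /e.
by field; rewrite sigma_neq0 natr_fact_neq0.
Qed.
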